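(* Let $E \to M$ be a smooth vector bundle over a smooth manifold $M$, and let $[\,\cdot,\cdot\,]:\Gamma(E)\times\Gamma(E)\to\Gamma(E)$ be an $\mathbb{R}$-bilinear bracket on the space $\Gamma(E)$ of smooth sections satisfying $$[X,[Y,Z]] = [[X,Y],Z] + [Y,[X,Z]] \quad \text{for all } X,Y,Z\in\Gamma(E).$$ Let $\mathcal{T}$ denote the set of all maps (not necessarily linear) $C^\infty(M)\to C^\infty(M)$, and suppose there is a map $\mathfrak{a}:\Gamma(E)\to\mathcal{T}$ such that $$(\mathfrak{a}(X)f)\,Y = [X,fY] - f[X,Y] \quad\text{for all } f\in C^\infty(M),\ X,Y\in\Gamma(E).$$ Then: (1) $\mathfrak{a}([X,Y]) = [\mathfrak{a}(X),\mathfrak{a}(Y)]_c$ for all $X,Y\in\Gamma(E)$, where for $T,S\in\mathcal{T}$ the commutator is defined by $[T,S]_c\,g = T(Sg) - S(Tg)$ for all $g\in C^\infty(M)$; (2) if $\mathfrak{a}$ is a linear map, then $\mathfrak{a}([X,Y]) = -\mathfrak{a}([Y,X])$ for all $X,Y\in\Gamma(E)$; (3) for each $X\in\Gamma(E)$, $\mathfrak{a}(X)(fg) = f\,(\mathfrak{a}(X)g) + (\mathfrak{a}(X)f)\,g$ for all $f,g\in C^\infty(M)$; consequently, if $\mathfrak{a}(X)$ is linear then it is a derivation of $C^\infty(M)$.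
   Context: $\Gamma(E)$ is regarded as a module over $C^\infty(M)$; it is faithful, i.e. for $h\in C^\infty(M)$, $hY=0$ for all $Y\in\Gamma(E)$ implies $h=0$. A derivation of $C^\infty(M)$ is an $\mathbb{R}$-linear map $D:C^\infty(M)\to C^\infty(M)$ with $D(fg)=fD(g)+D(f)g$. *)

(* Abstract algebraic model (no smooth-manifold library exists):
   R  : realType           -- the reals
   A  : comAlgType R       -- the commutative R-algebra C^oo(M)
   V  : lmodType A         -- the C^oo(M)-module Gamma(E) (faithful, by hypothesis)
   The real scalar action on V is  c . X := (c%:A) *: X. *)
From HB Require Import structures.
From mathcomp Require Import all_boot all_order all_algebra.
From mathcomp Require Import reals.
Set Implicit Arguments. Unset Strict Implicit. Unset Printing Implicit Defensive.
Import Order.TTheory GRing.Theory Num.Theory.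
Local Open Scope ring_scope.

Definition faithful_module (R : realType) (A : comAlgType R) (V : lmodType A) :=
  forall h : A, (forall Y : V, h *: Y = 0) -> h = 0.

Definition Rbilinear (R : realType) (A : comAlgType R) (V : lmodType A)
  (br : V -> V -> V) :=
  (forall (c : R) (X Y Z : V), br (c%:A *: X + Y) Z = c%:A *: br X Z + br Y Z) /\
  (forall (c : R) (X Y Z : V), br X (c%:A *: Y + Z) = c%:A *: br X Y + br X Z).

Definition leibniz_identity (V : zmodType) (br : V -> V -> V) :=
  forall X Y Z : V, br X (br Y Z) = br (br X Y) Z + br Y (br X Z).

Definition commutator (A : zmodType) (T S : A -> A) : A -> A :=
  fun g => T (S g) - S (T g).

Definition Rlinear_anchor (R : realType) (A : comAlgType R) (V : lmodType A)
  (a : V -> A -> A) :=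
  forall (c : R) (X Y : V), a (c%:A *: X + Y) = (fun f => c *: a X f + a Y f).

Definition Rlinear_map (R : realType) (A : comAlgType R) (T : A -> A) :=
  forall (c : R) (f g : A), T (c *: f + g) = c *: T f + T g.

Definition derivation (R : realType) (A : comAlgType R) (D : A -> A) :=
  Rlinear_map D /\ forall f g : A, D (f * g) = f * D g + D f * g.

(* The anchor is read off from the bracket through the identity
   [X, f Y] = (a X f) Y + f [X, Y]; faithfulness of Gamma(E) turns every
   identity between multiples (u Z = v Z for all Z) into an identity u = v
   in C^oo(M).  Expanding [X, [Y, f Z]] twice with this rule and applying the
   Leibniz identity to [[X, Y], f Z] yields the commutator formula, from which
   antisymmetry follows because commutators are antisymmetric; expanding
   [X, (f g) Z] = [X, f (g Z)] yields the product rule. *)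
From HB Require Import structures.
From mathcomp Require Import all_boot all_algebra.
From mathcomp Require Import reals.
From Stdlib Require Import FunctionalExtensionality.
Set Implicit Arguments. Unset Strict Implicit. Unset Printing Implicit Defensive.
Import GRing.Theory.
Local Open Scope ring_scope.

Lemma commutatorC (A : zmodType) (T S : A -> A) (g : A) :
  commutator T S g = - commutator S T g.
Proof. by rewrite /commutator opprB. Qed.

Section Anchor.

Variables (R : realType) (A : comAlgType R) (V : lmodType A).
Hypothesis faithV : faithful_module V.

Lemma faithful_scalerI (u v : A) : (forall Z : V, u *: Z = v *: Z) -> u = v.
Proof.
move=> uv; apply/eqP; rewrite -subr_eq0; apply/eqP; apply: faithV => Z.
by rewrite scalerBl uv subrr.
Qed.

Variables (br : V -> V -> V) (a : V -> A -> A).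
Hypothesis anchorE :
  forall (f : A) (X Y : V), a X f *: Y = br X (f *: Y) - f *: br X Y.

Lemma br_scaler (X Y : V) (f : A) : br X (f *: Y) = a X f *: Y + f *: br X Y.
Proof. by rewrite anchorE subrK. Qed.

Lemma anchorM (X : V) (f g : A) : a X (f * g) = f * a X g + a X f * g.
Proof.
apply: faithful_scalerI => Z.
rewrite anchorE -!scalerA !br_scaler !scalerDr !scalerA scalerDl.
by rewrite addrA addrK addrC.
Qed.

Hypothesis brDr : forall X Y Z : V, br X (Y + Z) = br X Y + br X Z.

Lemma br_br_scaler (X Y Z : V) (f : A) :
  br X (br Y (f *: Z)) =
  a X (a Y f) *: Z + (a Y f *: br X Z + a X f *: br Y Z) + f *: br X (br Y Z).
Proof. by rewrite br_scaler brDr !br_scaler !addrA. Qed.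

Hypothesis leibnizV : leibniz_identity br.

Lemma anchor_br (X Y : V) : a (br X Y) = commutator (a X) (a Y).
Proof.
apply: functional_extensionality => f; apply: faithful_scalerI => Z.
have brbrE W : br (br X Y) W = br X (br Y W) - br Y (br X W).
  by rewrite leibnizV addrK.
rewrite anchorE !brbrE !br_br_scaler /commutator scalerBl scalerBr.
rewrite [a X f *: _ + _]addrC.
set p := a X (a Y f) *: Z; set q := a Y (a X f) *: Z.
by rewrite (addrAC p) (addrAC q) opprD addrACA subrr addr0 opprD addrACA addrK.
Qed.

End Anchor.

Lemma Rbilinear_addr (R : realType) (A : comAlgType R) (V : lmodType A)
    (br : V -> V -> V) :
  Rbilinear br -> forall X Y Z : V, br X (Y + Z) = br X Y + br X Z.
Proof. by move=> [_ brlin] X Y Z; have := brlin 1 X Y Z; rewrite !scale1r. Qed.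

Theorem proposition1 (R : realType) (A : comAlgType R) (V : lmodType A)
  (Hfaith : faithful_module V)
  (br : V -> V -> V) (Hbil : Rbilinear br) (Hjac : leibniz_identity br)
  (a : V -> A -> A)
  (Ha : forall (f : A) (X Y : V), a X f *: Y = br X (f *: Y) - f *: br X Y) :
  (forall X Y : V, a (br X Y) = commutator (a X) (a Y)) /\
  (Rlinear_anchor a -> forall X Y : V, a (br X Y) = (fun f => - a (br Y X) f)) /\
  (forall X : V,
     (forall f g : A, a X (f * g) = f * a X g + a X f * g) /\
     (Rlinear_map (a X) -> derivation (a X))).
Proof.
have anchor_brE := anchor_br Hfaith Ha (Rbilinear_addr Hbil) Hjac.
split; first exact: anchor_brE.
split.
  move=> _ X Y; apply: functional_extensionality => f.
  by rewrite !anchor_brE commutatorC.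
move=> X; split=> [|aX_lin]; first exact: anchorM.
by split; [exact: aX_lin | exact: anchorM].
Qed.
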